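(* Let $A_1,\dots,A_n$ be groups, $G\subset A_1\times\dots\times A_n$ a subgroup with projections $p_i:G\to A_i$, and let $f:G\to\mathbb F$ be a homomorphism to a free group $\mathbb F$ whose image is non-abelian. Then there is an index $i$ such that $f$ factors through $p_i$, i.e. $\ker p_i\subset\ker f$. *)

From mathcomp Require Import all_boot.
Set Implicit Arguments. Unset Strict Implicit. Unset Printing Implicit Defensive.

Record AbsGroup := {
  carrier :> Type;
  gmul : carrier -> carrier -> carrier;
  gone : carrier;
  ginv : carrier -> carrier;
  gmulA : forall x y z, gmul x (gmul y z) = gmul (gmul x y) z;
  gmul1l : forall x, gmul gone x = x;
  gmul1r : forall x, gmul x gone = x;
  gmulVl : forall x, gmul (ginv x) x = gone;
  gmulVr : forall x, gmul x (ginv x) = gone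
}.

Definition is_hom (G H : AbsGroup) (f : G -> H) : Prop :=
  forall x y, f (gmul x y) = gmul (f x) (f y).

Definition is_free_group (F : AbsGroup) : Prop :=
  exists (X : Type) (iota : X -> F),
    forall (H : AbsGroup) (phi : X -> H),
      (exists h : F -> H, is_hom h /\ forall x, h (iota x) = phi x) /\
      (forall h1 h2 : F -> H, is_hom h1 -> is_hom h2 ->
         (forall x, h1 (iota x) = phi x) -> (forall x, h2 (iota x) = phi x) ->
         forall y, h1 y = h2 y).

Definition prodT (n : nat) (A : 'I_n -> AbsGroup) : Type := forall i : 'I_n, A i.
Definition pmul n (A : 'I_n -> AbsGroup) (x y : prodT A) : prodT A :=
  fun i => gmul (x i) (y i).
Definition pone n (A : 'I_n -> AbsGroup) : prodT A := fun i => gone (A i).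
Definition pinv n (A : 'I_n -> AbsGroup) (x : prodT A) : prodT A :=
  fun i => ginv (x i).

Definition is_subgroup n (A : 'I_n -> AbsGroup) (G : prodT A -> Prop) : Prop :=
  G (pone A) /\
  (forall x y, G x -> G y -> G (pmul x y)) /\
  (forall x, G x -> G (pinv x)).

(* f : G -> F is a homomorphism on the subgroup G (values of f outside G
   are irrelevant). *)
Definition is_hom_on n (A : 'I_n -> AbsGroup) (G : prodT A -> Prop) (F : AbsGroup)
  (f : prodT A -> F) : Prop :=
  forall x y, G x -> G y -> f (pmul x y) = gmul (f x) (f y).

Definition nonabelian_image n (A : 'I_n -> AbsGroup) (G : prodT A -> Prop)
  (F : AbsGroup) (f : prodT A -> F) : Prop :=
  exists x y, G x /\ G y /\ gmul (f x) (f y) <> gmul (f y) (f x).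

Definition ker_proj_sub_ker n (A : 'I_n -> AbsGroup) (G : prodT A -> Prop)
  (F : AbsGroup) (f : prodT A -> F) (i : 'I_n) : Prop :=
  forall x, G x -> x i = gone (A i) -> f x = gone F.

(* Suppose no kernel ker p_i lies in ker f, and pick b_i in ker p_i with
   f b_i <> 1.  Starting from an element a outside ker f, we successively kill
   coordinates: given a with trivial coordinates below i, one of a, a^x, a^y
   (where f x, f y do not commute) has image not commuting with f b_i, and its
   commutator with b_i lies outside ker f with trivial coordinates up to i.
   After n steps we get the identity outside ker f, a contradiction.

   The only property of free groups needed is that commutation is transitive
   on nontrivial elements and that a nontrivial p commuting with p^h forces h
   to commute with p.  We prove both for the group of reduced words on any
   alphabet, into which every free group embeds: centralizers of cyclically
   reduced words are cyclic (a combinatorics-on-words argument), conjugate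
   cyclically reduced words have equal length, and there are no involutions. *)

From mathcomp Require Import all_boot boolp zify.
Set Implicit Arguments. Unset Strict Implicit. Unset Printing Implicit Defensive.

Section GroupFacts.
Variable G : AbsGroup.
Local Infix "⋅" := (@gmul G) (at level 40, left associativity).
Local Notation "1" := (@gone G).
Implicit Types x y z t : G.

Lemma mulKg x y : ginv x ⋅ (x ⋅ y) = y.
Proof. by rewrite gmulA gmulVl gmul1l. Qed.
Lemma mulVKg x y : x ⋅ (ginv x ⋅ y) = y.
Proof. by rewrite gmulA gmulVr gmul1l. Qed.
Lemma mulgK x y : y ⋅ x ⋅ ginv x = y.
Proof. by rewrite -gmulA gmulVr gmul1r. Qed.
Lemma mulgVK x y : y ⋅ ginv x ⋅ x = y.
Proof. by rewrite -gmulA gmulVl gmul1r. Qed.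
Lemma mulgI x y z : x ⋅ y = x ⋅ z -> y = z.
Proof. by move=> e; rewrite -(mulKg x y) e mulKg. Qed.
Lemma invg_uniq x y : x ⋅ y = 1 -> y = ginv x.
Proof. by move=> e; apply: (@mulgI x); rewrite e gmulVr. Qed.
Lemma invgK x : ginv (ginv x) = x.
Proof. by symmetry; apply: invg_uniq; rewrite gmulVl. Qed.
Lemma invMg x y : ginv (x ⋅ y) = ginv y ⋅ ginv x.
Proof. by symmetry; apply: invg_uniq; rewrite gmulA mulgK gmulVr. Qed.
Lemma invg1 : ginv 1 = 1.
Proof. by symmetry; apply: invg_uniq; rewrite gmul1l. Qed.

Definition gcomm x y := x ⋅ y = y ⋅ x.
Definition conjg t x := t ⋅ x ⋅ ginv t.

Lemma gcommC x y : gcomm x y -> gcomm y x. Proof. by []. Qed.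
Lemma gcommxx x : gcomm x x. Proof. by []. Qed.
Lemma gcomm1 x : gcomm x 1. Proof. by rewrite /gcomm gmul1l gmul1r. Qed.
Lemma gcommVl x y : gcomm x y -> gcomm (ginv x) y.
Proof. by move=> e; apply: (@mulgI x); rewrite mulVKg gmulA e mulgK. Qed.
Lemma gcommMr x y z : gcomm x y -> gcomm x z -> gcomm x (y ⋅ z).
Proof. by move=> e1 e2; rewrite /gcomm gmulA e1 -gmulA e2 gmulA. Qed.

Lemma conjgM t x y : conjg t (x ⋅ y) = conjg t x ⋅ conjg t y.
Proof. by rewrite /conjg !gmulA mulgVK. Qed.
Lemma conjgV t x : conjg t (ginv x) = ginv (conjg t x).
Proof. by rewrite /conjg !invMg invgK gmulA. Qed.
Lemma conjgK t x : conjg (ginv t) (conjg t x) = x.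
Proof. by rewrite /conjg invgK !gmulA gmulVl gmul1l mulgVK. Qed.
Lemma conjgKV t x : conjg t (conjg (ginv t) x) = x.
Proof. by rewrite -{1}(invgK t) conjgK. Qed.
Lemma conjg_comp t s x : conjg t (conjg s x) = conjg (t ⋅ s) x.
Proof. by rewrite /conjg invMg !gmulA. Qed.
Lemma conj1g x : conjg 1 x = x.
Proof. by rewrite /conjg gmul1l invg1 gmul1r. Qed.
Lemma conjg1 t : conjg t 1 = 1.
Proof. by rewrite /conjg gmul1r gmulVr. Qed.
Lemma conjg_eq1 t x : conjg t x = 1 -> x = 1.
Proof. by move=> e; rewrite -(conjgK t x) e conjg1. Qed.
Lemma conjg_conj s h x : conjg s (conjg h x) = conjg (conjg s h) (conjg s x).
Proof.
have -> : conjg (conjg s h) (conjg s x) = conjg s h ⋅ conjg s x ⋅ ginv (conjg s h) by [].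
by rewrite -conjgV -!conjgM.
Qed.
Lemma gcomm_conj t x y : gcomm x y -> gcomm (conjg t x) (conjg t y).
Proof. by rewrite /gcomm -!conjgM => ->. Qed.
Lemma gcomm_conjV t x y : gcomm (conjg t x) (conjg t y) -> gcomm x y.
Proof. by move=> /(gcomm_conj (ginv t)); rewrite !conjgK. Qed.
Lemma conjg_fixP t x : conjg t x = x -> gcomm t x.
Proof. by move=> e; rewrite /gcomm -{2}e /conjg mulgVK. Qed.

Fixpoint gpow x n := if n is n'.+1 then x ⋅ gpow x n' else 1.
Lemma gpowD x n m : gpow x (n + m) = gpow x n ⋅ gpow x m.
Proof. by elim: n => [|n IH] /=; rewrite ?gmul1l // IH gmulA. Qed.
Lemma gcomm_gpow x n m : gcomm (gpow x n) (gpow x m).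
Proof. by rewrite /gcomm -!gpowD addnC. Qed.

End GroupFacts.

Lemma hom1 (G H : AbsGroup) (f : G -> H) : is_hom f -> f (gone G) = gone H.
Proof. by move=> hf; apply: (@mulgI _ (f (gone G))); rewrite -hf !gmul1r. Qed.
Lemma homV (G H : AbsGroup) (f : G -> H) x : is_hom f -> f (ginv x) = ginv (f x).
Proof. by move=> hf; apply: invg_uniq; rewrite -hf gmulVr hom1. Qed.

Definition comm_transitive (G : AbsGroup) := forall a b d : G, b <> gone G ->
  gcomm a b -> gcomm b d -> gcomm a d.

(* A nontrivial element commuting with one of its conjugates is centralized
   by the conjugator; together with the previous property this says that
   maximal abelian subgroups are malnormal (the CSA property). *)
Definition conj_centralizing (G : AbsGroup) := forall p h : G, p <> gone G ->
  gcomm p (conjg h p) -> gcomm h p.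

Lemma conjugators_commute (G : AbsGroup) : comm_transitive G -> conj_centralizing G ->
  forall p q x y : G, p <> gone G -> q <> gone G -> gcomm p q ->
  gcomm (conjg x p) q -> gcomm (conjg y p) q -> gcomm x y.
Proof.
move=> ct csa p q x y p1 q1 pq xpq ypq.
have xp : gcomm x p by apply: csa => //; apply: (ct _ q) => //; apply: gcommC.
have yp : gcomm y p by apply: csa => //; apply: (ct _ q) => //; apply: gcommC.
by apply: (ct _ p) => //; apply: gcommC.
Qed.

Lemma injective_hom_reflects (F W : AbsGroup) (phi : F -> W) :
  is_hom phi -> injective phi ->
  comm_transitive W -> conj_centralizing W -> comm_transitive F /\ conj_centralizing F.
Proof.
move=> hphi inj ct csa.
have neq1 x : x <> gone F -> phi x <> gone W.
  by move=> x1 e; apply: x1; apply: inj; rewrite e hom1.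
have commE x y : gcomm (phi x) (phi y) <-> gcomm x y.
  by rewrite /gcomm -!hphi; split=> [/inj|->].
split.
- move=> a b d /neq1 b1 /commE ab /commE bd; apply/commE; exact: ct ab bd.
- move=> p h /neq1 p1 hp; apply/commE; apply: csa => //.
  by rewrite /conjg -homV // -!hphi; apply/commE.
Qed.

(* The free group on a type X, realised as reduced words in the letters
   x^{+1}, x^{-1}; X is given a classical decidable equality. *)
Section ReducedWords.
Variable X : Type.
Definition letter := ({classic X} * bool)%type.
Implicit Types (a b : letter) (s t u : seq letter).

Definition linv a : letter := (a.1, ~~ a.2).
Lemma linvK a : linv (linv a) = a.
Proof. by case: a => x e; rewrite /linv /= negbK. Qed.
Lemma linv_neq a : linv a != a.
Proof. by case: a => x e; rewrite /linv /= xpair_eqE eqxx /=; case: e. Qed.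
Lemma linv_inj a b : linv a = linv b -> a = b.
Proof. by move=> e; rewrite -(linvK a) e linvK. Qed.
Lemma linv_eq a b : (linv a == b) = (a == linv b).
Proof. by apply/eqP/eqP => [<-|->]; rewrite linvK. Qed.

Fixpoint reduced s : bool :=
  if s is a :: s' then (if s' is b :: _ then b != linv a else true) && reduced s'
  else true.
Definition joinable s t : bool :=
  if t is b :: _ then (if s is a :: s' then b != linv (last a s') else true) else true.

Lemma reduced_cons a s :
  reduced (a :: s) = (if s is b :: _ then b != linv a else true) && reduced s.
Proof. by []. Qed.
Lemma reduced_cat s t : reduced (s ++ t) = [&& reduced s, reduced t & joinable s t].
Proof.
elim: s => [|a [|c s] IH]; first by case: t => [|b t] /=; rewrite ?andbT.
  by case: t {IH} => [|b t] //=; rewrite [RHS]andbC.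
by rewrite cat_cons reduced_cons IH /= !andbA.
Qed.
Lemma reduced_behead a s : reduced (a :: s) -> reduced s.
Proof. by case/andP. Qed.
Lemma reduced_catl s t : reduced (s ++ t) -> reduced s.
Proof. by rewrite reduced_cat => /and3P[]. Qed.
Lemma reduced_catr s t : reduced (s ++ t) -> reduced t.
Proof. by rewrite reduced_cat => /and3P[]. Qed.
Lemma joinable_rcons s a b t : joinable (rcons s a) (b :: t) = (b != linv a).
Proof. by case: s => [|c s] //=; rewrite last_rcons. Qed.
Lemma joinable_catr s t u : t != [::] -> joinable s (t ++ u) = joinable s t.
Proof. by case: t. Qed.
Lemma joinable_catl u s t : s != [::] -> joinable (u ++ s) t = joinable s t.
Proof. by case: s => [|a s] // _; case: t => [|b t] //; case: u => [|c u] //=; rewrite last_cat. Qed.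

Definition winv s := rev (map linv s).
Lemma winv_cons a s : winv (a :: s) = rcons (winv s) (linv a).
Proof. by rewrite /winv /= rev_cons. Qed.
Lemma winv_rcons s a : winv (rcons s a) = linv a :: winv s.
Proof. by rewrite /winv map_rcons rev_rcons. Qed.
Lemma winv_cat s t : winv (s ++ t) = winv t ++ winv s.
Proof. by rewrite /winv map_cat rev_cat. Qed.
Lemma winvK s : winv (winv s) = s.
Proof. by rewrite /winv map_rev revK -map_comp (eq_map linvK) map_id. Qed.
Lemma size_winv s : size (winv s) = size s.
Proof. by rewrite /winv size_rev size_map. Qed.

Lemma reduced_winv s : reduced s -> reduced (winv s).
Proof.
elim: s => [|a s IH] // /andP[h1 h2]; rewrite winv_cons -cats1 reduced_cat IH // andTb.
case: s h1 {IH h2} => [|b s] // h1.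
by rewrite winv_cons joinable_rcons linvK eq_sym.
Qed.

Definition push a s : seq letter :=
  if s is b :: s' then (if b == linv a then s' else a :: s) else [:: a].
Definition rmul s t := foldr push t s.

Lemma rmul_cat s s' t : rmul (s ++ s') t = rmul s (rmul s' t).
Proof. exact: foldr_cat. Qed.

Lemma push_reduced a t : reduced t -> reduced (push a t).
Proof.
case: t => [|b t] //= /andP[h1 h2]; case: ifP => hb /=; last by rewrite hb h1 h2.
by case: t h1 h2 => [|c t] //= _ /andP[].
Qed.
Lemma rmul_reduced s t : reduced t -> reduced (rmul s t).
Proof. by elim: s => [|a s IH] //= h; apply/push_reduced/IH. Qed.

Lemma pushK a t : reduced t -> push a (push (linv a) t) = t.
Proof.
case: t => [|b t] /=; first by rewrite eqxx.
rewrite linvK; case: ifP => [/eqP ->|_] /=; last by rewrite eqxx.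
by case: t => [|c t] //= /andP[h1 _]; rewrite (negbTE h1).
Qed.

Lemma rmul_winv_cat s u : rmul s (winv s ++ u) = u.
Proof. by elim: s u => [|a s IH] u //=; rewrite winv_cons -cats1 -catA IH /= eqxx. Qed.
Lemma rmul_winv_catV s u : rmul (winv s) (s ++ u) = u.
Proof. by rewrite -{2}(winvK s) rmul_winv_cat. Qed.
Lemma rmul_winv s : rmul s (winv s) = [::].
Proof. by have := rmul_winv_cat s [::]; rewrite cats0. Qed.
Lemma rmul_winvV s : rmul (winv s) s = [::].
Proof. by have := rmul_winv_catV s [::]; rewrite cats0. Qed.

Lemma rmul_cat_reduced s t : reduced (s ++ t) -> rmul s t = s ++ t.
Proof.
elim: s => [|a s IH] //= /andP[h1 h2]; rewrite IH //.
by case: (s ++ t) h1 => [|b u] //= h1; rewrite (negbTE h1).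
Qed.
Lemma rmul0 s : reduced s -> rmul s [::] = s.
Proof. by move=> h; rewrite rmul_cat_reduced ?cats0. Qed.

Lemma rmul_push v u a : reduced v -> reduced u -> rmul (push a v) u = push a (rmul v u).
Proof.
case: v => [|b v] hv hu //=; case: ifP => [/eqP ->|_] //=.
by rewrite pushK //; apply: rmul_reduced.
Qed.
Lemma rmulA s t u : reduced t -> reduced u -> rmul (rmul s t) u = rmul s (rmul t u).
Proof.
by elim: s => [|a s IH] //= ht hu; rewrite rmul_push ?IH //; apply: rmul_reduced.
Qed.

Definition word := {s : seq letter | reduced s}.
Definition mkword s (h : reduced s) : word := exist _ s h.
Lemma word_inj (x y : word) : sval x = sval y -> x = y.
Proof. by case: x y => x hx [y hy] /= e; subst; rewrite (bool_irrelevance hx hy). Qed.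

Definition wmul (x y : word) : word := mkword (rmul_reduced (sval x) (proj2_sig y)).
Definition wone : word := mkword (isT : reduced [::]).
Definition wginv (x : word) : word := mkword (reduced_winv (proj2_sig x)).
Lemma wmulA x y z : wmul x (wmul y z) = wmul (wmul x y) z.
Proof. by apply: word_inj; rewrite /= rmulA // ?(proj2_sig y) ?(proj2_sig z). Qed.
Lemma wmul1l x : wmul wone x = x. Proof. exact: word_inj. Qed.
Lemma wmul1r x : wmul x wone = x. Proof. by apply: word_inj; apply/rmul0/(proj2_sig x). Qed.
Lemma wmulVl x : wmul (wginv x) x = wone. Proof. by apply: word_inj; apply: rmul_winvV. Qed.
Lemma wmulVr x : wmul x (wginv x) = wone. Proof. by apply: word_inj; apply: rmul_winv. Qed.
End ReducedWords.

Definition FreeW (X : Type) : AbsGroup :=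
  Build_AbsGroup (@wmulA X) (@wmul1l X) (@wmul1r X) (@wmulVl X) (@wmulVr X).

(* Every free group embeds into a reduced-word group: the universal property
   gives h : F -> FreeW X, and evaluating words back in F is a left inverse. *)
Lemma free_group_embeds (F : AbsGroup) : is_free_group F ->
  exists (X : Type) (phi : F -> FreeW X), is_hom phi /\ injective phi.
Proof.
move=> [X [iota univ]].
pose val_letter (a : letter X) : F := if a.2 then iota a.1 else ginv (iota a.1).
pose eval (s : seq (letter X)) : F := foldr (fun a g => gmul (val_letter a) g) (gone F) s.
have eval_push a t : eval (push a t) = gmul (val_letter a) (eval t).
  have val_linv : val_letter (linv a) = ginv (val_letter a).
    by case: a => x [] //=; rewrite /val_letter /= invgK.
  by case: t => [|b t] //=; case: ifP => [/eqP ->|_] //=; rewrite val_linv mulVKg.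
have eval_rmul s t : eval (rmul s t) = gmul (eval s) (eval t).
  by elim: s => [|a s IH] /=; rewrite ?gmul1l // eval_push IH gmulA.
pose ev (x : FreeW X) : F := eval (sval x).
have hev : is_hom ev by move=> x y; rewrite /ev /= eval_rmul.
pose gen (x : X) : FreeW X := mkword (isT : reduced [:: ((x : {classic X}), true)]).
have [[h [hh hgen]] _] := univ (FreeW X) gen.
have evK y : ev (h y) = y.
  apply: ((univ F iota).2 (fun y => ev (h y)) id) => [x z|//|x|//] /=.
  - by rewrite hh hev.
  - by rewrite hgen /ev /= gmul1r.
exists X, h; split => // x y e.
by rewrite -(evK x) -(evK y) e.
Qed.

(* Combinatorics on words (Lyndon–Schützenberger): two words commuting under
   concatenation are powers of a common word, hence every nonempty word c is a
   power of a "primitive root" r such that every word commuting with c is a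
   power of r. *)
Section WordCombinatorics.
Variable T : eqType.
Implicit Types x y z u : seq T.

Fixpoint catpow z n := if n is n'.+1 then z ++ catpow z n' else [::].
Lemma catpowD z n m : catpow z (n + m) = catpow z n ++ catpow z m.
Proof. by elim: n => [|n IH] //=; rewrite IH catA. Qed.
Lemma catpow1 z : catpow z 1 = z. Proof. by rewrite /= cats0. Qed.
Lemma catpowSr z n : catpow z n.+1 = catpow z n ++ z.
Proof. by rewrite -addn1 catpowD catpow1. Qed.
Lemma catpowM z n m : catpow (catpow z n) m = catpow z (n * m).
Proof. by elim: m => [|m IH] /=; rewrite ?muln0 // IH mulnS catpowD. Qed.
Lemma size_catpow z n : size (catpow z n) = n * size z.
Proof. by elim: n => [|n IH] //=; rewrite size_cat IH mulSn. Qed.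
Lemma catpow_nil n : catpow [::] n = [::].
Proof. by elim: n. Qed.
Lemma catpow_rot a b l : catpow (a ++ b) l ++ a = a ++ catpow (b ++ a) l.
Proof. by elim: l => [|l IH] /=; rewrite ?cats0 // -catA IH !catA. Qed.

Lemma catI x y z : x ++ y = x ++ z -> y = z.
Proof. by elim: x => [|a x IH] //= [/IH]. Qed.

Lemma prefix_of_cat x a y b : x ++ a = y ++ b -> size x <= size y ->
  y = x ++ drop (size x) y.
Proof.
move=> e h; have := congr1 (take (size x)) e.
by rewrite take_size_cat // takel_cat // => ex; rewrite {1}ex cat_take_drop.
Qed.

Lemma commuting_words_powers x y : x ++ y = y ++ x ->
  exists z i j, x = catpow z i /\ y = catpow z j.
Proof.
move: {2}(size x + size y) (leqnn (size x + size y)) => n.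
elim: n x y => [|n IH] x y hs e.
  move: hs; rewrite leqn0 addn_eq0 !size_eq0 => /andP[/eqP -> /eqP ->].
  by exists [::], 0, 0.
wlog hxy : x y hs e / size x <= size y => [Hwlog|].
  case: (leqP (size x) (size y)) => [|/ltnW] hxy; first exact: Hwlog.
  have [|z [i [j [-> ->]]]] := Hwlog y x _ (esym e) hxy; first by rewrite addnC.
  by exists z, j, i.
case: x e hs hxy => [|a x'] e hs hxy; first by exists y, 0, 1; rewrite catpow1.
have ey := prefix_of_cat e hxy; set y2 := drop _ y in ey.
have e2 : (a :: x') ++ y2 = y2 ++ a :: x' by apply: (@catI (a :: x')); rewrite -ey catA -ey.
have hs2 : size (a :: x') + size y2 <= n by move: hs; rewrite ey size_cat /=; lia.
have [z [i [j [hx hy]]]] := IH _ _ hs2 e2.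
by exists z, i, (i + j); rewrite ey catpowD -hx -hy.
Qed.

Lemma commute_with_power x y l : 0 < l ->
  x ++ catpow y l = catpow y l ++ x -> x ++ y = y ++ x.
Proof.
move: {2}(size x) (leqnn (size x)) => n.
elim: n x y l => [|n IH] x y l hs hl e.
  by move: hs; rewrite leqn0 size_eq0 => /eqP ->; rewrite cats0.
case: l hl e => [//|l] _ e.
case: (y =P [::]) => [->|/eqP yn]; first by rewrite cats0.
have ey : y ++ (catpow y l ++ x) = x ++ catpow y l.+1 by rewrite e /= catA.
case: (leqP (size y) (size x)) => hyx.
  have [x2 ex] : exists x2, x = y ++ x2 by exists (drop (size y) x); apply: prefix_of_cat ey hyx.
  have e2 : x2 ++ catpow y l.+1 = catpow y l.+1 ++ x2.
    apply: (@catI y); rewrite catA -ex e ex catA -catpowSr /=.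
    by rewrite -catA.
  have hs2 : size x2 <= n.
    by move: hs yn; rewrite ex size_cat -size_eq0; lia.
  by rewrite ex -catA (IH _ _ _ hs2 (ltn0Sn l) e2) catA.
have [y2 ey2] : exists y2, y = x ++ y2.
  by exists (drop (size x) y); apply: prefix_of_cat (esym ey) (ltnW hyx).
have e3 : catpow (x ++ y2) l.+1 = catpow (y2 ++ x) l.+1.
  by apply: (@catI x); rewrite -catpow_rot -ey2 -e.
have e4 : x ++ y2 = y2 ++ x.
  have := congr1 (take (size (x ++ y2))) e3.
  by rewrite /= take_size_cat // take_size_cat // !size_cat addnC.
by rewrite ey2 -catA e4 catA.
Qed.

Lemma primitive_root c : c != [::] -> exists r K, [/\ r != [::], 0 < K, c = catpow r K &
  forall w, w ++ c = c ++ w -> exists i, w = catpow r i].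
Proof.
move=> cn.
pose root_size m := `[< exists2 z, size z = m & z != [::] /\ exists K, c = catpow z K >].
have ex : exists m, root_size m.
  by exists (size c); apply/asboolP; exists c => //; split => //; exists 1; rewrite catpow1.
case: (ex_minnP ex) => m /asboolP[r rm [rn [K cK]]] minm.
have Kpos : 0 < K by case: K cK => [|K] // cK; move: cn; rewrite cK.
exists r, K; split => // w; case: (w =P [::]) => [-> _|/eqP wn ew]; first by exists 0.
have [u [i [j [wu cu]]]] := commuting_words_powers ew.
have un : u != [::] by apply: contraNneq wn => u0; rewrite wu u0 catpow_nil.
have ur : u ++ r = r ++ u.
  by apply: (commute_with_power Kpos); rewrite -cK cu -catpowSr.
have [q [a [b [uq rq]]]] := commuting_words_powers ur.
have qn : q != [::] by apply: contraNneq rn => q0; rewrite rq q0 catpow_nil.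
have : m <= size q.
  apply: minm; apply/asboolP; exists q => //; split => //.
  by exists (b * K); rewrite cK rq catpowM.
rewrite -rm {1}rq size_catpow; have : 0 < size q by rewrite lt0n size_eq0.
case: b rq => [|[|b]] rq qpos; first by move: rn; rewrite rq.
  by rewrite catpow1 in rq; exists (a * i); rewrite wu uq catpowM rq.
rewrite !mulSn; lia.
Qed.
End WordCombinatorics.

Section FreeWordGroup.
Variable X : Type.
Local Notation W := (FreeW X).
Local Notation letter := (letter X).
Implicit Types (a b : letter) (s t u v m r c : seq letter).

Lemma valM (x y : W) : sval (gmul x y) = rmul (sval x) (sval y). Proof. by []. Qed.
Lemma valV (x : W) : sval (ginv x) = winv (sval x). Proof. by []. Qed.
Lemma valR (x : W) : reduced (sval x). Proof. exact: (proj2_sig x). Qed.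

Lemma rmul_decomposition s t : reduced s -> reduced t -> exists s1 m t1,
  [/\ s = s1 ++ m, t = winv m ++ t1 & rmul s t = s1 ++ t1].
Proof.
elim: s => [|a s IH] hs ht; first by exists [::], [::], t.
have [s1 [m [t1 [es -> e]]]] := IH (reduced_behead hs) ht; clear IH; subst s.
rewrite /= e; case: s1 hs e => [|b s1] hs e; last first.
  have hb : b != linv a by case/andP: hs.
  by exists [:: a, b & s1], m, t1; rewrite /= (negbTE hb).
case: t1 e => [|b t1] e; first by exists [:: a], m, [::].
rewrite /=; case: ifP => [/eqP hb|_]; last by exists [:: a], m, (b :: t1).
by exists [::], (a :: m), t1; rewrite winv_cons -cats1 -catA hb.
Qed.

Definition cyc_reduced s := reduced s && joinable s s.

Lemma reduced_catpow r n : reduced r -> joinable r r -> reduced (catpow r n).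
Proof.
move=> h1 h2; elim: n => [|[|n] IH] //=; first by rewrite cats0.
rewrite reduced_cat h1 IH /=; case: (r =P [::]) => [->|/eqP rn]; first by rewrite catpow_nil.
by rewrite joinable_catr.
Qed.

Lemma cyc_reduced_catpow r n : reduced r -> joinable r r -> cyc_reduced (catpow r n).
Proof.
move=> h1 h2; rewrite /cyc_reduced reduced_catpow //=.
case: n => [|n] //; case: (r =P [::]) => [->|/eqP rn]; first by rewrite catpow_nil.
by rewrite {1}catpowSr /= joinable_catl // joinable_catr.
Qed.

Lemma cyc_reduced_root r K : 0 < K -> cyc_reduced (catpow r K) -> reduced r && joinable r r.
Proof.
case: K => [//|K] _ /andP[hred hjoin]; rewrite (reduced_catl hred) /=.
case: (r =P [::]) => [->//|/eqP rn].
by move: hjoin; rewrite {1}catpowSr /= joinable_catl // joinable_catr.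
Qed.

Lemma cyc_reduced_winv s : cyc_reduced s -> cyc_reduced (winv s).
Proof.
case/andP => h1 h2; rewrite /cyc_reduced reduced_winv // andTb.
case/lastP: s h1 h2 => [//|[|a s] e] h1 h2.
  by rewrite winv_rcons /= linvK linv_neq.
move: h2; rewrite winv_rcons winv_cons /= !last_rcons linvK.
by rewrite eq_sym.
Qed.

Lemma commute_without_shortening (cw vw : W) : cyc_reduced (sval cw) -> gcomm cw vw ->
  size (sval vw) <= size (sval (gmul cw vw)) ->
  sval vw ++ sval cw = sval cw ++ sval vw \/
  sval (ginv vw) ++ sval cw = sval cw ++ sval (ginv vw).
Proof.
move=> + hcomm; have comm_inv := congr1 sval (gcommVl (gcommC hcomm)).
have {hcomm}/= hcomm := congr1 sval hcomm.
case: cw vw hcomm comm_inv => c hc [v hv] /= hcomm comm_inv /andP[hcr hcc] hsz.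
have [c1 [m [v1 [ec1 ev1 ecv]]]] := rmul_decomposition hcr hv.
have [v2 [m' [c2 [ev2 ec2 evc]]]] := rmul_decomposition hv hcr.
have E : c1 ++ v1 = v2 ++ c2 by rewrite -ecv -evc.
have s1 := congr1 size ec1; have s2 := congr1 size ev1; have s3 := congr1 size ev2.
have s4 := congr1 size ec2; have s5 := congr1 size E.
rewrite ecv in hsz; rewrite !size_cat ?size_winv in s1 s2 s3 s4 s5 hsz.
have [m0|m_pos] := posnP (size m).
  have m_nil : m = [::] by apply: size0nil.
  have m'_nil : m' = [::] by apply: size0nil; lia.
  left; rewrite m_nil cats0 in ec1; rewrite m_nil /= in ev1.
  rewrite m'_nil cats0 in ev2; rewrite m'_nil /= in ec2.
  by rewrite {1}ev2 {1}ec2 -E -ec1 -ev1.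
case: v2 E ev2 s3 s5 evc => [|b v2] E ev2 s3 s5 evc.
  rewrite /= in ev2 s3 s5.
  have v1_nil : v1 = [::] by apply: size0nil; lia.
  have vm : winv v = m by rewrite ev1 v1_nil cats0 winvK.
  have hm : reduced m by move: hcr; rewrite ec1 => /reduced_catr.
  have m_nil : m != [::] by rewrite -size_eq0 -lt0n.
  have e1 : rmul m c = m ++ c.
    apply: rmul_cat_reduced; rewrite reduced_cat hcr hm /=.
    by move: hcc; rewrite {1}ec1 joinable_catl.
  have e2 : rmul c m = c ++ m.
    apply: rmul_cat_reduced; rewrite reduced_cat hcr hm /=.
    by move: hcc; rewrite {2}ec2 -ev2 ev1 v1_nil cats0 winvK joinable_catr.
  by right; rewrite vm -e1 -e2 -vm.
exfalso; case: c1 ec1 E s1 s5 hsz ecv => [|a c1] ec1 E s1 s5 hsz ecv.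
  by rewrite /= in hsz; lia.
case: E => eab _.
case/lastP: m ec1 ev1 m_pos {s1 s2 s4 hsz} => [//|m0 e] ec1 ev1 _.
have hb : b = linv e by move: ev1; rewrite ev2 winv_rcons => -[].
by move: hcc; rewrite ec1 /= last_cat last_rcons eab hb eqxx.
Qed.

Definition in_powers r v := exists n, v = catpow r n \/ v = winv (catpow r n).

Lemma in_powers_shift r K u : reduced r -> joinable r r -> in_powers r u ->
  in_powers r (rmul (winv (catpow r K)) u).
Proof.
move=> hr hrr [j [->|->]]; last first.
  exists (j + K); right; rewrite rmul_cat_reduced -winv_cat -catpowD //.
  exact/reduced_winv/reduced_catpow.
case: (leqP K j) => hKj.
  by exists (j - K); left; rewrite -{1}(subnKC hKj) catpowD rmul_winv_catV.
exists (K - j); right; rewrite -{1}(subnKC (ltnW hKj)) catpowD winv_cat rmul_cat.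
by rewrite rmul_winvV rmul0 //; apply/reduced_winv/reduced_catpow.
Qed.

(* By induction on the
   length of v: either c shortens v and we pass to c v, or v or v^{-1}
   commutes with c as a plain word. *)
Lemma centralizer_cyc_reduced (cw : W) r K : cyc_reduced (sval cw) -> 0 < K ->
  sval cw = catpow r K ->
  (forall w, w ++ sval cw = sval cw ++ w -> exists i, w = catpow r i) ->
  forall v : W, gcomm cw v -> in_powers r (sval v).
Proof.
move=> hc K0 cK root v; have /andP[hr hrr] : reduced r && joinable r r.
  by apply: (cyc_reduced_root K0); rewrite -cK.
move: {2}(size (sval v)) (leqnn (size (sval v))) => n.
elim: n v => [|n IH] v hs hcomm.
  by exists 0; left; apply: size0nil; lia.
case: (ltnP (size (sval (gmul cw v))) (size (sval v))) => hshort; last first.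
  case: (commute_without_shortening hc hcomm hshort) => /root[i hi]; exists i.
    by left.
  by right; rewrite -[sval v]winvK -valV hi.
have cv_pow : in_powers r (sval (gmul cw v)).
  by apply: IH (gcommMr (gcommxx cw) hcomm); lia.
by rewrite -(mulKg cw v) valM valV cK; apply: in_powers_shift.
Qed.

Lemma centralizer_cyclic (c : W) : cyc_reduced (sval c) -> c <> gone W ->
  exists r, [/\ reduced r, joinable r r, r != [::], exists2 K, 0 < K & sval c = catpow r K &
    forall v : W, gcomm c v -> in_powers r (sval v)].
Proof.
move=> hc c1; have cn : sval c != [::] by apply: contra_notN c1 => /eqP e; apply: word_inj.
have [r [K [rn K0 cK root]]] := primitive_root cn.
have /andP[hr hrr] : reduced r && joinable r r by apply: (cyc_reduced_root K0); rewrite -cK.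
exists r; split => //; first by exists K.
exact: (centralizer_cyc_reduced hc K0 cK root).
Qed.

Lemma sval_gpow r (hr : reduced r) n : joinable r r -> sval (gpow (mkword hr : W) n) = catpow r n.
Proof.
move=> hrr; elim: n => [|n IH] //.
by rewrite [gpow _ _]/= valM IH rmul_cat_reduced //; apply: (reduced_catpow n.+1).
Qed.

Lemma in_powers_commute r (x y : W) : reduced r -> joinable r r ->
  in_powers r (sval x) -> in_powers r (sval y) -> gcomm x y.
Proof.
move=> hr hrr; have gen (z : W) : in_powers r (sval z) -> exists n,
    z = gpow (mkword hr : W) n \/ z = ginv (gpow (mkword hr : W) n).
  by case=> n [e|e]; exists n; [left|right]; apply: word_inj; rewrite ?valV sval_gpow.
move=> /gen [n [->|->]] /gen [m [->|->]].
- exact: gcomm_gpow.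
- exact/gcommC/gcommVl/gcomm_gpow.
- exact/gcommVl/gcomm_gpow.
- exact/gcommVl/gcommC/gcommVl/gcomm_gpow.
Qed.

Definition lword a : W := mkword (isT : reduced [:: a]).

Lemma push_reduced_cons a s : reduced (a :: s) -> push a s = a :: s.
Proof. by case: s => [|b s] //= /andP[hb _]; rewrite (negbTE hb). Qed.

Lemma conj_letter_strip a (g s : W) :
  sval g = a :: rcons (sval s) (linv a) -> g = conjg (lword a) s.
Proof.
move=> gE; have hg := valR g; rewrite gE in hg.
have hg' : reduced ((a :: sval s) ++ [:: linv a]) by rewrite cat_cons cats1.
apply: word_inj; rewrite /conjg !valM valV gE /= push_reduced_cons; last exact: reduced_catl hg'.
by rewrite (_ : winv _ = [:: linv a]) // rmul_cat_reduced // cat_cons cats1.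
Qed.

Lemma cyclic_decomposition (g : W) : exists t c : W, cyc_reduced (sval c) /\ g = conjg t c.
Proof.
move: {2}(size (sval g)) (leqnn (size (sval g))) => n.
elim: n g => [|n IH] g hs.
  exists (gone W), g; rewrite conj1g; split => //.
  by rewrite (size0nil (_ : size (sval g) = 0)) //; lia.
case hc: (cyc_reduced (sval g)); first by exists (gone W), g; rewrite conj1g.
have hr := valR g.
case Eg: (sval g) hc hr hs => [|a s] // hc hr hs.
case/lastP: s Eg hc hr hs => [|s e] Eg hc hr hs.
  by move: hc; rewrite /cyc_reduced /= eq_sym linv_neq.
have he : e = linv a.
  move: hc; rewrite /cyc_reduced hr /= last_rcons => /negbT.
  by rewrite negbK => /eqP ->; rewrite linvK.
subst e; have hs0 : reduced s.
  by move: hr; rewrite -cats1 -cat_cons => /reduced_catl /reduced_behead.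
clear hc; have [|t [c [hc sE]]] := IH (mkword hs0); first by move: hs; rewrite /= size_rcons; lia.
exists (gmul (lword a) t), c; split => //.
by rewrite -conjg_comp -sE; apply: conj_letter_strip; rewrite Eg.
Qed.

Lemma rotate_first (c : W) b s : sval c = b :: s -> cyc_reduced (sval c) ->
  sval (conjg (lword (linv b)) c) = rcons s b /\ cyc_reduced (rcons s b).
Proof.
move=> cE; rewrite cE => /andP[hr hj].
have hbs : reduced (rcons s b).
  rewrite -cats1 reduced_cat (reduced_behead hr) /=.
  by case: s hr hj {cE} => [|x s] //= _; rewrite eq_sym.
split; last first.
  rewrite /cyc_reduced hbs; case: s hr hj {cE hbs} => [|x s] /=.
    by rewrite eq_sym linv_neq.
  by case/andP; rewrite last_rcons.
rewrite /conjg !valM valV cE /= linvK eqxx.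
have -> : winv [:: linv b] = [:: b] by rewrite /winv /= linvK.
by rewrite rmul_cat_reduced ?cats1.
Qed.

Lemma rotate_last (c : W) s a : sval c = rcons s a -> cyc_reduced (sval c) ->
  sval (conjg (lword a) c) = a :: s /\ cyc_reduced (a :: s).
Proof.
move=> cE; rewrite cE => /andP[hr hj].
have has : reduced (a :: s).
  rewrite reduced_cons (reduced_catl (s := s) (t := [:: a])) ?cats1 // andbT.
  by case: s hr hj {cE} => [|x s] //=; rewrite last_rcons eq_sym.
split; last first.
  rewrite /cyc_reduced has andTb.
  case: s hr hj {cE has} => [|x s] hr _; first by rewrite /= eq_sym linv_neq.
  by move: hr; rewrite -cats1 reduced_cat => /and3P[_ _] /=.
rewrite /conjg !valM valV cE (_ : winv _ = [:: linv a]) //=.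
rewrite push_reduced_cons; last first.
  rewrite reduced_cons hr andbT.
  case: s hj {cE has hr} => [|x s] /= hj; first by rewrite eq_sym linv_neq.
  by rewrite last_rcons in hj.
by rewrite -cats1 -cat_cons rmul_cat (_ : rmul [:: a] _ = [::]) ?rmul0 //= eqxx.
Qed.

Lemma conj_word_not_joinable u w : u != [::] ->
  joinable ((u ++ w) ++ winv u) ((u ++ w) ++ winv u) = false.
Proof. by case: u => [//|y u] _; rewrite winv_cons -cats1 catA /= last_cat /= linvK eqxx. Qed.

Lemma conj_without_cancellation (h c : W) h0 a b s :
  sval h = rcons h0 a -> sval c = b :: s ->
  a != linv b -> a != last b s -> ~~ cyc_reduced (sval (conjg h c)).
Proof.
move=> hE cE hab has; have hr := valR h; have hc := valR c; rewrite hE in hr; rewrite cE in hc.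
have r1 : reduced (rcons h0 a ++ b :: s).
  by rewrite reduced_cat hr hc joinable_rcons eq_sym linv_eq.
have r2 : reduced ((rcons h0 a ++ b :: s) ++ winv (rcons h0 a)).
  rewrite reduced_cat r1 reduced_winv // winv_rcons joinable_catl //=.
  by apply: contra has => /eqP /linv_inj ->.
rewrite /conjg !valM valV hE cE (rmul_cat_reduced r1) (rmul_cat_reduced r2).
by rewrite /cyc_reduced conj_word_not_joinable ?andbF // -size_eq0 size_rcons.
Qed.

(* Two cyclically reduced conjugate words have the same length: peel off the
   last letter of the conjugator, which either rotates c or cannot occur. *)
Lemma conj_cyc_reduced_size (h c : W) : cyc_reduced (sval c) ->
  cyc_reduced (sval (conjg h c)) -> size (sval (conjg h c)) = size (sval c).
Proof.
move: {2}(size (sval h)) (leqnn (size (sval h))) => n.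
elim: n h c => [|n IH] h c hs hc hq.
  by rewrite (_ : h = gone W) ?conj1g //; apply: word_inj; apply: size0nil; lia.
have := valR h; case/lastP Eh: (sval h) => [|h0 a] hr.
  by rewrite (_ : h = gone W) ?conj1g //; apply: word_inj.
have hr0 : reduced h0 by move: hr; rewrite -cats1 => /reduced_catl.
have hH : h = gmul (mkword hr0 : W) (lword a).
  by apply: word_inj; rewrite Eh valM /= rmul_cat_reduced ?cats1.
have by_rotation : cyc_reduced (sval (conjg (lword a) c)) ->
    size (sval (conjg (lword a) c)) = size (sval c) -> size (sval (conjg h c)) = size (sval c).
  move=> hca <-; rewrite hH -conjg_comp; apply: IH hca _; last by rewrite conjg_comp -hH.
  by move: hs; rewrite Eh size_rcons /=; lia.
case Ec: (sval c) => [|b s].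
  by rewrite (_ : c = gone W) ?conjg1 //; apply: word_inj.
have [hab|hab] := eqVneq a (linv b).
  have [e1 e2] := rotate_first Ec hc; subst a.
  by rewrite -Ec; apply: by_rotation; rewrite e1 // Ec size_rcons.
have [hal|hal] := eqVneq a (last b s).
  have Ec' : sval c = rcons (belast b s) a by rewrite Ec lastI hal.
  have [e1 e2] := rotate_last Ec' hc.
  by rewrite -Ec; apply: by_rotation; rewrite e1 // Ec /= size_belast.
by rewrite (negbTE (conj_without_cancellation Eh Ec hab hal)) in hq.
Qed.

Lemma no_involution (g : W) : gmul g g = gone W -> g = gone W.
Proof.
move=> gg; have [t [c [/andP[hcr hcj] gE]]] := cyclic_decomposition g.
move: gg; rewrite gE -conjgM => /conjg_eq1 /(congr1 sval).
rewrite valM rmul_cat_reduced; last by rewrite reduced_cat hcr hcj.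
move=> /(congr1 size); rewrite size_cat => c0.
by rewrite (_ : c = gone W) ?conjg1 //; apply: word_inj; apply: size0nil; rewrite /= in c0; lia.
Qed.

(* Conjugate b to a cyclically reduced c: then a and d (conjugated alike)
   lie in the cyclic centralizer of c. *)
Lemma FreeW_comm_transitive : comm_transitive W.
Proof.
move=> a b d b1 ab bd.
have [t [c [hc bE]]] := cyclic_decomposition b.
have c1 : c <> gone W by move=> e; apply: b1; rewrite bE e conjg1.
have [r [hr hrr _ _ cent]] := centralizer_cyclic hc c1.
have cb : conjg (ginv t) b = c by rewrite bE conjgK.
apply: (gcomm_conjV (t := ginv t)); apply: (in_powers_commute hr hrr); apply: cent.
  by rewrite -cb; apply/gcomm_conj/gcommC.
by rewrite -cb; apply: gcomm_conj.
Qed.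

(* If c is cyclically reduced and commutes with its conjugate c^h, then c^h
   is a power of the root r of c = r^K; as c^h is cyclically reduced of the
   same length, c^h = c or c^h = c^{-1}.  In the second case h^2 centralizes
   c, hence so does h by transitivity (h^2 <> 1 as there are no involutions). *)
Lemma conj_centralizing_cyc_reduced (c h : W) : cyc_reduced (sval c) -> c <> gone W ->
  gcomm c (conjg h c) -> gcomm h c.
Proof.
move=> hc c1 hq.
have [r [hr hrr rn [K K0 cK] cent]] := centralizer_cyclic hc c1.
have exponent e : size (catpow r e) = size (sval c) -> e = K.
  by rewrite cK !size_catpow => /eqP; rewrite eqn_pmul2r ?lt0n ?size_eq0 // => /eqP.
have [e [qe|qe]] := cent _ hq.
  have /exponent eK : size (catpow r e) = size (sval c).
    by rewrite -qe conj_cyc_reduced_size // qe; apply: cyc_reduced_catpow.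
  by apply: conjg_fixP; apply: word_inj; rewrite qe cK eK.
have /exponent eK : size (catpow r e) = size (sval c).
  rewrite -(size_winv (catpow r e)) -qe conj_cyc_reduced_size // qe.
  exact/cyc_reduced_winv/cyc_reduced_catpow.
have hqc : conjg h c = ginv c by apply: word_inj; rewrite qe valV cK eK.
have hhc : gcomm (gmul h h) c.
  by apply: conjg_fixP; rewrite -conjg_comp hqc conjgV hqc invgK.
have [hh|hh] := pselect (gmul h h = gone W).
  by rewrite (no_involution hh); apply/gcommC/gcomm1.
exact: (FreeW_comm_transitive hh (gcommMr (gcommxx h) (gcommxx h)) hhc).
Qed.

(* The general case reduces to the cyclically reduced one by conjugation. *)
Lemma FreeW_conj_centralizing : conj_centralizing W.
Proof.
move=> p h p1 hq.
have [t [c [hc pE]]] := cyclic_decomposition p.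
have c1 : c <> gone W by move=> e; apply: p1; rewrite pE e conjg1.
have cp : conjg (ginv t) p = c by rewrite pE conjgK.
have := gcomm_conj (ginv t) hq; rewrite conjg_conj cp => hq'.
have := gcomm_conj t (conj_centralizing_cyc_reduced hc c1 hq').
by rewrite conjgKV -pE.
Qed.
End FreeWordGroup.

Lemma free_group_properties (F : AbsGroup) : is_free_group F ->
  comm_transitive F /\ conj_centralizing F.
Proof.
move=> /free_group_embeds [X [phi [hphi inj]]].
exact: (injective_hom_reflects hphi inj (@FreeW_comm_transitive X) (@FreeW_conj_centralizing X)).
Qed.

Section ProductSubgroup.
Variables (n : nat) (A : 'I_n -> AbsGroup) (G : prodT A -> Prop) (F : AbsGroup).
Variable f : prodT A -> F.
Hypothesis G1 : G (pone A).
Hypothesis GM : forall x y, G x -> G y -> G (pmul x y).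
Hypothesis GV : forall x, G x -> G (pinv x).
Hypothesis fM : is_hom_on G f.
Implicit Types u w : prodT A.

Definition pconj u w := pmul (pmul u w) (pinv u).
Definition pcomm u w := pmul (pmul (pinv u) (pinv w)) (pmul u w).

Lemma G_pconj u w : G u -> G w -> G (pconj u w).
Proof. by move=> Gu Gw; apply: GM; [apply: GM|apply: GV]. Qed.
Lemma G_pcomm u w : G u -> G w -> G (pcomm u w).
Proof. by move=> Gu Gw; apply: GM; apply: GM => //; apply: GV. Qed.

Lemma f_one : f (pone A) = gone F.
Proof.
have pone_idem : pmul (pone A) (pone A) = pone A.
  by apply: functional_extensionality_dep => i; rewrite /pmul /pone gmul1l.
by apply: (@mulgI _ (f (pone A))); rewrite -fM // pone_idem gmul1r.
Qed.

Lemma f_inv u : G u -> f (pinv u) = ginv (f u).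
Proof.
move=> Gu; apply: invg_uniq; rewrite -fM //; last exact: GV.
rewrite -f_one; congr f.
by apply: functional_extensionality_dep => i; rewrite /pmul /pinv /pone gmulVr.
Qed.

Lemma f_pconj u w : G u -> G w -> f (pconj u w) = conjg (f u) (f w).
Proof.
move=> Gu Gw; rewrite /pconj fM; [|exact: GM|exact: GV].
by rewrite fM // f_inv.
Qed.

Lemma f_pcomm u w : G u -> G w -> f (pcomm u w) = gone F -> gcomm (f u) (f w).
Proof.
move=> Gu Gw; have Gu' := GV Gu; have Gw' := GV Gw.
rewrite /pcomm fM; [|exact: GM|exact: GM].
by rewrite !fM // !f_inv // => /invg_uniq; rewrite invMg !invgK.
Qed.

Lemma pconj_coord u w j : w j = gone (A j) -> pconj u w j = gone (A j).
Proof. by move=> wj; rewrite /pconj /pmul /pinv wj gmul1r gmulVr. Qed.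
Lemma pcomm_coord u w j : u j = gone (A j) \/ w j = gone (A j) -> pcomm u w j = gone (A j).
Proof.
by case=> e; rewrite /pcomm /pmul /pinv e invg1 ?gmul1l ?gmul1r gmulVl.
Qed.

Hypotheses (ct : comm_transitive F) (csa : conj_centralizing F).
Variables (x y : prodT A).
Hypotheses (Gx : G x) (Gy : G y) (fxy : ~ gcomm (f x) (f y)).

(* If f a, f b are nontrivial, then one of a, a^x, a^y has image not
   commuting with f b: otherwise f x and f y would commute. *)
Lemma noncommuting_conjugate a b : G a -> G b -> f a <> gone F -> f b <> gone F ->
  exists a', [/\ G a', forall j, a j = gone (A j) -> a' j = gone (A j) &
    ~ gcomm (f a') (f b)].
Proof.
move=> Ga Gb fa fb; apply/not_existsP => all_comm; apply: fxy.
have comm_with_b a' : G a' -> (forall j, a j = gone (A j) -> a' j = gone (A j)) ->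
    gcomm (f a') (f b).
  by move=> Ga' ha'; apply/not_notP => nc; apply: (all_comm a').
apply: (conjugators_commute ct csa fa fb (comm_with_b a Ga (fun _ => id))).
  by rewrite -f_pconj //; apply: comm_with_b; [apply: G_pconj|apply: pconj_coord].
by rewrite -f_pconj //; apply: comm_with_b; [apply: G_pconj|apply: pconj_coord].
Qed.

Lemma vanishing_prefix :
  (forall i, exists b, [/\ G b, b i = gone (A i) & f b <> gone F]) ->
  forall m, m <= n -> exists z, [/\ G z, forall j : 'I_n, j < m -> z j = gone (A j) &
    f z <> gone F].
Proof.
move=> witness; elim=> [|m IH] hm.
  exists x; split => // fx1; apply: fxy; rewrite fx1; exact/gcommC/gcomm1.
have [a [Ga ha fa]] := IH (ltnW hm).
have [b [Gb bm fb]] := witness (Ordinal hm).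
have [a' [Ga' ha' nc]] := noncommuting_conjugate Ga Gb fa fb.
exists (pcomm a' b); split; first exact: G_pcomm.
  move=> j; rewrite ltnS leq_eqVlt => /orP[/eqP jm|jm]; apply: pcomm_coord.
    by right; rewrite (_ : j = Ordinal hm) //; apply: val_inj.
  by left; apply/ha'/ha.
by move=> e; apply/nc/f_pcomm.
Qed.
End ProductSubgroup.

Theorem mainTheorem11 (n : nat) (A : 'I_n -> AbsGroup) (G : prodT A -> Prop)
  (F : AbsGroup) (f : prodT A -> F) :
  is_subgroup G -> is_free_group F -> is_hom_on G f -> nonabelian_image G f ->
  exists i : 'I_n, ker_proj_sub_ker G f i.
Proof.
move=> [G1 [GM GV]] /free_group_properties [ct csa] fM [x [y [Gx [Gy fxy]]]].
apply/not_existsP => no_factor.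
have witness i : exists b, [/\ G b, b i = gone (A i) & f b <> gone F].
  have /existsNP[b] := no_factor i; move=> /not_implyP[Gb /not_implyP[bi fb]].
  by exists b.
have [z [Gz z1 fz]] := vanishing_prefix G1 GM GV fM ct csa Gx Gy fxy witness (leqnn n).
apply: fz; rewrite -(f_one G1 fM); congr f.
by apply: functional_extensionality_dep => j; apply: z1.
Qed.
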